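(* Let $r\ge 1$ and let $x_0,y_0$ be positive integers. Let $p_r(x_0,y_0;x,y)$ denote the probability that the CA competition process with fitness ratio $r$ started at $(x_0,y_0)$ is at state $(x,y)$ at time $x+y-x_0-y_0$. Then for all integers $k\ge0$, $h\ge0$, \[ p_r(x_0,y_0;x_0+k,y_0+h)\ \le\ \frac{(x_0)_k\,(y_0)_h}{(r^{-1})_k\,(rx_0+y_0)_h}. \]
   Context: The CA competition process with fitness ratio $r\ge 1$ started at $(x_0,y_0)$ is the discrete-time Markov chain $\{(X_t,Y_t)\}_{t\ge0}$ on $\{(x,y)\in\mathbb{Z}^2: x\ge1,y\ge1\}$ with $(X_0,Y_0)=(x_0,y_0)$ and transition probabilities: from $(x,y)$ it moves to $(x+1,y)$ with probability $\frac{rx}{rx+y}$ and to $(x,y+1)$ with probability $\frac{y}{rx+y}$. $(x)_k=\prod_{i=0}^{k-1}(x+i)$ denotes the Pochhammer symbol (with $(x)_0=1$). *)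

From Stdlib Require Import Reals Lra Lia.
Open Scope R_scope.

(* States (x,y) with x,y >= 1 are represented by pairs of naturals;
   positivity is imposed as a hypothesis on the start state and is preserved. *)

Definition ca_step (r : R) (x y x' y' : nat) : R :=
  if (Nat.eqb x' (S x) && Nat.eqb y' y)%bool then r * INR x / (r * INR x + INR y)
  else if (Nat.eqb x' x && Nat.eqb y' (S y))%bool then INR y / (r * INR x + INR y)
  else 0.

Fixpoint ca_prob (r : R) (t : nat) (x y x' y' : nat) {struct t} : R :=
  match t with
  | O => if (Nat.eqb x x' && Nat.eqb y y')%bool then 1 else 0
  | S t' => ca_step r x y (S x) y * ca_prob r t' (S x) y x' y'
          + ca_step r x y x (S y) * ca_prob r t' x (S y) x' y'
  end.

Definition p_r (r : R) (x0 y0 x y : nat) : R :=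
  ca_prob r (x + y - x0 - y0)%nat x0 y0 x y.

Fixpoint poch (a : R) (k : nat) : R :=
  match k with
  | O => 1
  | S k' => poch a k' * (a + INR k')
  end.

(* The bound B(k,h), extended by 0 outside the quadrant x >= x0, y >= y0, is a
   supersolution of the forward equation of the chain: the mass it sends into a
   state in one step is at most its value there.  The chain starts with mass
   1 = B(0,0) at (x0,y0), so induction on time bounds every transition
   probability by it.  At an interior state, after dividing by B(k+1,h+1) and
   putting s = r(x0+k) + y0 + h and c = rk, the supersolution inequality reads
   (1+c)/(s+1) + (s-c)/(s+r) <= 1, whose defect is (r-1)(s-c)/((s+1)(s+r));
   this is where r >= 1 is used. *)

From Stdlib Require Import Reals Lra Lia.
Open Scope R_scope.

Lemma ca_step_right r x y : ca_step r x y (S x) y = r * INR x / (r * INR x + INR y).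
Proof. unfold ca_step; rewrite !Nat.eqb_refl; reflexivity. Qed.

Lemma ca_step_up r x y : ca_step r x y x (S y) = INR y / (r * INR x + INR y).
Proof.
  unfold ca_step; rewrite (proj2 (Nat.eqb_neq x (S x))) by lia.
  rewrite !Nat.eqb_refl; reflexivity.
Qed.

Lemma ca_step_refl r x y : ca_step r x y x y = 0.
Proof.
  unfold ca_step.
  rewrite (proj2 (Nat.eqb_neq x (S x))), (proj2 (Nat.eqb_neq y (S y))) by lia.
  now rewrite Bool.andb_false_l, Bool.andb_false_r.
Qed.

(* No positivity of [b] is needed since [/ 0 = 0]. *)
Lemma Rdiv_nonneg_nonneg a b : 0 <= a -> 0 <= b -> 0 <= a / b.
Proof.
  intros Ha Hb; destruct (Req_dec b 0) as [->|Hb0].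
  - unfold Rdiv; rewrite Rinv_0, Rmult_0_r; lra.
  - apply Rle_mult_inv_pos; lra.
Qed.

Lemma ca_step_nonneg r x y x' y' : 0 <= r -> 0 <= ca_step r x y x' y'.
Proof.
  intros Hr; pose proof (pos_INR x); pose proof (pos_INR y).
  unfold ca_step.
  destruct (_ && _)%bool; [|destruct (_ && _)%bool]; try lra;
    apply Rdiv_nonneg_nonneg; nra.
Qed.

(* At [x' = 0] the first term is junk killed by [ca_step r 0 y' 0 y' = 0];
   symmetrically at [y' = 0]. *)
Lemma ca_prob_succ_last r t : forall x y x' y',
  ca_prob r (S t) x y x' y' =
  ca_prob r t x y (pred x') y' * ca_step r (pred x') y' x' y'
  + ca_prob r t x y x' (pred y') * ca_step r x' (pred y') x' y'.
Proof.
  induction t as [|t IHt]; intros x y x' y'.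
  - destruct x' as [|x'], y' as [|y']; cbn [pred ca_prob];
      rewrite ?ca_step_refl, ?ca_step_right, ?ca_step_up;
      repeat match goal with |- context [Nat.eqb ?a ?b] => destruct (Nat.eqb_spec a b) end;
      cbn [andb]; subst; try lia; ring.
  - change (ca_prob r (S (S t)) x y x' y') with
      (ca_step r x y (S x) y * ca_prob r (S t) (S x) y x' y'
       + ca_step r x y x (S y) * ca_prob r (S t) x (S y) x' y').
    rewrite (IHt (S x) y), (IHt x (S y)); cbn [ca_prob]; ring.
Qed.

Lemma poch_pos a k : 0 < a -> 0 < poch a k.
Proof.
  intros Ha; induction k as [|k IHk]; cbn [poch]; [lra|].
  pose proof (pos_INR k); apply Rmult_lt_0_compat; lra.
Qed.

Lemma competition_ratio_le_1 r s c :
  1 <= r -> 0 <= c -> c < s -> (1 + c) / (s + 1) + (s - c) / (s + r) <= 1.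
Proof.
  intros Hr Hc Hcs.
  assert (Hgap : 1 - ((1 + c) / (s + 1) + (s - c) / (s + r))
                 = (r - 1) * (s - c) / ((s + 1) * (s + r))) by (field; lra).
  assert (0 <= (r - 1) * (s - c) / ((s + 1) * (s + r))) by (apply Rdiv_nonneg_nonneg; nra).
  lra.
Qed.

Section QuadrantBound.

Variables (r : R) (x0 y0 : nat).

Definition pochhammer_bound (k h : nat) : R :=
  poch (INR x0) k * poch (INR y0) h / (poch (/ r) k * poch (r * INR x0 + INR y0) h).

Definition quadrant_bound (x y : nat) : R :=
  if ((x0 <=? x) && (y0 <=? y))%bool then pochhammer_bound (x - x0) (y - y0) else 0.

Lemma quadrant_bound_shift k h : quadrant_bound (x0 + k) (y0 + h) = pochhammer_bound k h.
Proof.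
  unfold quadrant_bound; rewrite !(proj2 (Nat.leb_le _ _)) by lia; cbn [andb].
  now replace (x0 + k - x0)%nat with k by lia; replace (y0 + h - y0)%nat with h by lia.
Qed.

Lemma quadrant_bound_outside x y : (x < x0)%nat \/ (y < y0)%nat -> quadrant_bound x y = 0.
Proof.
  unfold quadrant_bound; intros [Hx | Hy].
  - now rewrite (proj2 (Nat.leb_gt x0 x)).
  - now rewrite (proj2 (Nat.leb_gt y0 y)), Bool.andb_false_r.
Qed.

Hypotheses (Hr : 1 <= r) (Hx0 : (1 <= x0)%nat) (Hy0 : (1 <= y0)%nat).

Let HX0 : 1 <= INR x0. Proof. now apply (le_INR 1). Qed.
Let HY0 : 1 <= INR y0. Proof. now apply (le_INR 1). Qed.
Let Hir : 0 < / r. Proof. apply Rinv_0_lt_compat; lra. Qed.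
Let HrX0 : 1 <= r * INR x0. Proof. nra. Qed.

Lemma pochhammer_bound_pos k h : 0 < pochhammer_bound k h.
Proof.
  unfold pochhammer_bound.
  apply Rdiv_lt_0_compat; apply Rmult_lt_0_compat; apply poch_pos; nra.
Qed.

Lemma quadrant_bound_nonneg x y : 0 <= quadrant_bound x y.
Proof.
  unfold quadrant_bound; destruct (_ && _)%bool; [|lra].
  apply Rlt_le, pochhammer_bound_pos.
Qed.

Lemma pochhammer_bound_succ_k k h :
  pochhammer_bound (S k) h = pochhammer_bound k h * ((INR x0 + INR k) / (/ r + INR k)).
Proof.
  unfold pochhammer_bound; cbn [poch]; pose proof (pos_INR k).
  pose proof (poch_pos (INR x0) k ltac:(lra)); pose proof (poch_pos (/ r) k Hir).
  pose proof (poch_pos (r * INR x0 + INR y0) h ltac:(nra)).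
  field; repeat split; nra.
Qed.

Lemma pochhammer_bound_succ_h k h :
  pochhammer_bound k (S h)
  = pochhammer_bound k h * ((INR y0 + INR h) / (r * INR x0 + INR y0 + INR h)).
Proof.
  unfold pochhammer_bound; cbn [poch]; pose proof (pos_INR h).
  pose proof (poch_pos (INR y0) h ltac:(lra)); pose proof (poch_pos (/ r) k Hir).
  pose proof (poch_pos (r * INR x0 + INR y0) h ltac:(nra)).
  field; repeat split; nra.
Qed.

Lemma pochhammer_bound_edge k :
  pochhammer_bound k 0 * (r * (INR x0 + INR k) / (r * (INR x0 + INR k) + INR y0))
  <= pochhammer_bound (S k) 0.
Proof.
  pose proof (pos_INR k); pose proof (pochhammer_bound_pos k 0).
  rewrite pochhammer_bound_succ_k.
  apply Rmult_le_compat_l; [lra|].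
  replace ((INR x0 + INR k) / (/ r + INR k)) with (r * (INR x0 + INR k) / (1 + r * INR k))
    by (field; split; nra).
  unfold Rdiv; apply Rmult_le_compat_l; [nra|].
  apply Rinv_le_contravar; nra.
Qed.

Lemma pochhammer_bound_interior k h :
  pochhammer_bound k (S h)
    * (r * (INR x0 + INR k) / (r * (INR x0 + INR k) + (INR y0 + INR h + 1)))
  + pochhammer_bound (S k) h
    * ((INR y0 + INR h) / (r * (INR x0 + INR k + 1) + (INR y0 + INR h)))
  <= pochhammer_bound (S k) (S h).
Proof.
  pose proof (pos_INR k); pose proof (pos_INR h); pose proof (pochhammer_bound_pos k h).
  rewrite (pochhammer_bound_succ_k k (S h)), (pochhammer_bound_succ_k k h),
    (pochhammer_bound_succ_h k h).
  set (P := pochhammer_bound k h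
            * ((INR y0 + INR h) / (r * INR x0 + INR y0 + INR h))
            * ((INR x0 + INR k) / (/ r + INR k))).
  assert (HP : 0 < P).
  { unfold P; apply Rmult_lt_0_compat; [apply Rmult_lt_0_compat; [assumption|]|];
      apply Rdiv_lt_0_compat; nra. }
  set (s := r * (INR x0 + INR k) + (INR y0 + INR h)).
  apply Rle_trans with (P * ((1 + r * INR k) / (s + 1) + (s - r * INR k) / (s + r))).
  - right; unfold P, s; field; repeat split; nra.
  - rewrite <- (Rmult_1_r P) at 2.
    apply Rmult_le_compat_l; [lra|].
    apply competition_ratio_le_1; unfold s; nra.
Qed.

Lemma quadrant_bound_supersolution x y :
  quadrant_bound (pred x) y * ca_step r (pred x) y x y
  + quadrant_bound x (pred y) * ca_step r x (pred y) x y
  <= quadrant_bound x y.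
Proof.
  destruct (Nat.lt_ge_cases x x0) as [Hx | Hx].
  { rewrite !quadrant_bound_outside by lia; lra. }
  destruct (Nat.lt_ge_cases y y0) as [Hy | Hy].
  { rewrite !quadrant_bound_outside by lia; lra. }
  assert (exists k, x = (x0 + k)%nat) as [k ->] by (exists (x - x0)%nat; lia).
  assert (exists h, y = (y0 + h)%nat) as [h ->] by (exists (y - y0)%nat; lia).
  destruct k as [|k], h as [|h].
  - rewrite (quadrant_bound_outside (pred (x0 + 0))), (quadrant_bound_outside _ (pred (y0 + 0)))
      by lia.
    rewrite quadrant_bound_shift; pose proof (pochhammer_bound_pos 0 0); lra.
  - rewrite (quadrant_bound_outside (pred (x0 + 0))) by lia.
    rewrite Nat.add_succ_r; cbn [pred]; rewrite ca_step_up, <- Nat.add_succ_r,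
      !quadrant_bound_shift, pochhammer_bound_succ_h, Nat.add_0_r, plus_INR.
    right; rewrite Rplus_assoc; ring.
  - rewrite (quadrant_bound_outside _ (pred (y0 + 0))) by lia.
    rewrite Nat.add_succ_r; cbn [pred]; rewrite ca_step_right, <- Nat.add_succ_r,
      !quadrant_bound_shift, Nat.add_0_r, plus_INR, Rmult_0_l, Rplus_0_r.
    apply pochhammer_bound_edge.
  - rewrite !Nat.add_succ_r; cbn [pred];
      rewrite ca_step_right, ca_step_up, !S_INR, !plus_INR.
    repeat rewrite <- Nat.add_succ_r; rewrite !quadrant_bound_shift.
    apply pochhammer_bound_interior.
Qed.

Lemma ca_prob_le_quadrant_bound t : forall x y, ca_prob r t x0 y0 x y <= quadrant_bound x y.
Proof.
  induction t as [|t IHt]; intros x y.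
  - cbn [ca_prob].
    destruct (Nat.eqb_spec x0 x) as [<-|]; destruct (Nat.eqb_spec y0 y) as [<-|]; cbn [andb];
      try apply quadrant_bound_nonneg.
    rewrite <- (Nat.add_0_r x0), <- (Nat.add_0_r y0), quadrant_bound_shift.
    right; unfold pochhammer_bound; cbn [poch]; field.
  - rewrite ca_prob_succ_last.
    eapply Rle_trans; [|apply quadrant_bound_supersolution].
    apply Rplus_le_compat; apply Rmult_le_compat_r; auto; apply ca_step_nonneg; lra.
Qed.

End QuadrantBound.

Theorem lemma2 (r : R) (x0 y0 k h : nat) :
  1 <= r -> (1 <= x0)%nat -> (1 <= y0)%nat ->
  p_r r x0 y0 (x0 + k) (y0 + h) <=
  (poch (INR x0) k * poch (INR y0) h) /
  (poch (/ r) k * poch (r * INR x0 + INR y0) h).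
Proof.
  intros Hr Hx0 Hy0.
  change (_ / _) with (pochhammer_bound r x0 y0 k h).
  rewrite <- quadrant_bound_shift.
  apply ca_prob_le_quadrant_bound; assumption.
Qed.
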